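(* Assume $\ell=2$. Consider joint laws of $(Y^{(0)},Y^{(1)},D,Z)$ satisfying (Exclusion) $Y^{(d,0)}=Y^{(d,1)}$ a.s. (written $Y^{(d)}$), (Joint independence) $Z\perp(Y^{(0)},Y^{(1)})$, and (Outcome consistency) $Y=(1-D)Y^{(0)}+DY^{(1)}$. Then for every such law with observed law $\mathcal P$ of $(Y,D,Z)$, $$\max_{\mathbf v\in\mathcal V}\mathbf v^\top\mathbf p\le \mathbb E[Y^{(1)}-Y^{(0)}]\le-\max_{\mathbf v\in\mathcal V}\mathbf v^\top\bar{\mathbf p},$$ and the bounds are sharp: for every observed law $\mathcal P$ arising from such a law, there exist such laws inducing $\mathcal P$ attaining the lower bound and the upper bound respectively.
   Context: $D\in\{0,1\}$ treatment; $Y$ outcome with values $\gamma_0<\dots<\gamma_{n-1}$; instrument $Z\in\{0,1\}$ with $\mathcal P(Z=z)>0$; $[n]=\{0,\dots,n-1\}$; $Y^{(d,z)}$ potential outcomes. Vectors $\mathbf p,\bar{\mathbf p}\in\mathbb R^{4n}$: $p_{ydz}=\mathcal P(Y=\gamma_y,D=d\mid Z=z)$, $\bar p_{ydz}=p_{y(1-d)z}$, and $\mathbf v^\top\mathbf p=\sum_{y,d,z}v_{ydz}p_{ydz}$. $\mathcal V=\{\mathbf u(\mathbf B):\mathbf B\in S\}$, where $S=S_1\cup S_2\cup S_3\subseteq\{0,1\}^{n\times2\times2}$: $\mathbf B\in S_1$ iff some $t\in\{0,\dots,n-2\}$ has $B_{i00}=B_{i01}=1$ for $i\ge t$ and $B_{i00}\ne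 B_{i01}$ for $i<t$, $B_{i10}\ne B_{i11}$ for all $i$, and some $i,j$ have $B_{i10}=B_{j11}=1$; $\mathbf B\in S_2$ iff $B_{(n-1)00}=B_{(n-1)01}=B_{010}=B_{011}=1$, $B_{i00}\ne B_{i01}$ for $i<n-1$, $B_{j10}\ne B_{j11}$ for $j>0$; $\mathbf B\in S_3$ iff some $t\in\{1,\dots,n-1\}$ has $B_{i10}=B_{i11}=1$ for $i\le t$ and $B_{i10}\ne B_{i11}$ for $i>t$, $B_{i00}\ne B_{i01}$ for all $i$, and some $i,j$ have $B_{i00}=B_{j01}=1$. With $\alpha=-\gamma_0-\gamma_t$ on $S_1$, $-\gamma_0-\gamma_{n-1}$ on $S_2$, $-\gamma_t-\gamma_{n-1}$ on $S_3$: $u_{i00}=-\gamma_i-\alpha$ if $B_{i00}=1$ else $\gamma_0$; $u_{i10}=\gamma_i$ if $B_{i10}=1$ else $-\gamma_{n-1}-\alpha$; $u_{i01}=-\gamma_i$ if $B_{i01}=1$ else $\gamma_0+\alpha$; $u_{i11}=\gamma_i+\alpha$ if $B_{i11}=1$ else $-\gamma_{n-1}$. *)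

From mathcomp Require Import all_boot all_order all_algebra.
Set Implicit Arguments. Unset Strict Implicit. Unset Printing Implicit Defensive.
Import Order.TTheory GRing.Theory Num.Theory.
Local Open Scope ring_scope.

Section Defs.
Variables (R : realFieldType) (n : nat).

(* A joint law of (Y^(0), Y^(1), D, Z): q a b d z = P(Y^(0)=gamma_a, Y^(1)=gamma_b, D=d, Z=z).
   Booleans encode D and Z (false = 0, true = 1). *)
Definition law := 'I_n -> 'I_n -> bool -> bool -> R.

Definition PZ (q : law) (z : bool) : R :=
  \sum_(a < n) \sum_(b < n) \sum_(d : bool) q a b d z.
Definition PY01 (q : law) (a b : 'I_n) : R :=
  \sum_(d : bool) \sum_(z : bool) q a b d z.
Definition PY01Z (q : law) (a b : 'I_n) (z : bool) : R :=
  \sum_(d : bool) q a b d z.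

Definition valid_law (q : law) : Prop :=
  [/\ forall a b d z, 0 <= q a b d z,
      \sum_(a < n) \sum_(b < n) \sum_(d : bool) \sum_(z : bool) q a b d z = 1,
      forall z, 0 < PZ q z
    & forall a b z, PY01Z q a b z = PY01 q a b * PZ q z].

(* Observed joint law of (Y, D, Z) under outcome consistency
   Y = (1-D) Y^(0) + D Y^(1):  P(Y = gamma_y, D = d, Z = z). *)
Definition obs_joint (q : law) (y : 'I_n) (d z : bool) : R :=
  \sum_(a < n) \sum_(b < n)
     (if (if d then b else a) == y then q a b d z else 0).

Definition vec := 'I_n -> bool -> bool -> R.

Definition pvec (q : law) : vec := fun y d z => obs_joint q y d z / PZ q z.
Definition pbar (p : vec) : vec := fun y d z => p y (~~ d) z.
Definition dot (v p : vec) : R :=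
  \sum_(y < n) \sum_(d : bool) \sum_(z : bool) v y d z * p y d z.

Definition ATE (gamma : nat -> R) (q : law) : R :=
  \sum_(a < n) \sum_(b < n) \sum_(d : bool) \sum_(z : bool)
     q a b d z * (gamma b - gamma a).

Definition bmat := 'I_n -> bool -> bool -> bool.

Definition inS1 (B : bmat) (t : nat) : Prop :=
  [/\ (t.+2 <= n)%N,
      forall i : 'I_n, (t <= i)%N -> B i false false /\ B i false true,
      forall i : 'I_n, (i < t)%N -> B i false false != B i false true,
      forall i : 'I_n, B i true false != B i true true
    & exists i j : 'I_n, B i true false /\ B j true true].

Definition inS2 (B : bmat) : Prop :=
  forall i : 'I_n,
    [/\ nat_of_ord i = n.-1 -> B i false false /\ B i false true,
        nat_of_ord i = 0%N -> B i true false /\ B i true true,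
        (i < n.-1)%N -> B i false false != B i false true
      & (0 < i)%N -> B i true false != B i true true].

Definition inS3 (B : bmat) (t : nat) : Prop :=
  [/\ (1 <= t)%N /\ (t <= n.-1)%N,
      forall i : 'I_n, (i <= t)%N -> B i true false /\ B i true true,
      forall i : 'I_n, (t < i)%N -> B i true false != B i true true,
      forall i : 'I_n, B i false false != B i false true
    & exists i j : 'I_n, B i false false /\ B j false true].

Definition uvec (gamma : nat -> R) (B : bmat) (alpha : R) : vec :=
  fun i d z =>
    match d, z with
    | false, false => if B i false false then - gamma i - alpha else gamma 0%N
    | true, false => if B i true false then gamma i else - gamma n.-1 - alpha
    | false, true => if B i false true then - gamma i else gamma 0%N + alpha
    | true, true => if B i true true then gamma i + alpha else - gamma n.-1
    end.

Definition inV (gamma : nat -> R) (v : vec) : Prop :=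
  exists B : bmat,
    (exists t, inS1 B t /\ v = uvec gamma B (- gamma 0%N - gamma t))
    \/ (inS2 B /\ v = uvec gamma B (- gamma 0%N - gamma n.-1))
    \/ (exists t, inS3 B t /\ v = uvec gamma B (- gamma t - gamma n.-1)).

Definition is_max (P : vec -> Prop) (f : vec -> R) (m : R) : Prop :=
  (exists v, P v /\ f v = m) /\ (forall v, P v -> f v <= m).

End Defs.

(* Both bounds are linear-programming bounds over the law of the principal strata
   (Y^(0), Y^(1), compliance type).  Every u(B) in V is dual feasible,
     max(u_{a00}, u_{b10}) + max(u_{a01}, u_{b11}) <= gamma_b - gamma_a,
   and, since Z is independent of (Y^(0), Y^(1)), weighting these inequalities by
   P(Y^(0) = gamma_a, Y^(1) = gamma_b) gives u(B)'p <= E[Y^(1) - Y^(0)].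
   For sharpness, put the never-takers at Y^(1) = gamma_0 and the always-takers at
   Y^(0) = gamma_{n-1}, and couple the remaining complier and defier margins
   independently: this law reproduces p, and its ATE is linear in the never-taker
   and always-taker masses.  Filling those masses greedily along the order of the
   gammas gives complementary slackness with some u(B), B in S_1, S_2 or S_3, so
   u(B)'p equals that ATE, which is thus the maximum over V and is attained.
   Exchanging Y^(0) and Y^(1) and flipping D preserves the model, negates the ATE
   and turns p into pbar, which yields the upper bound. *)

From mathcomp Require Import all_boot all_order all_algebra.
From mathcomp Require Import ring lra zify.
Set Implicit Arguments. Unset Strict Implicit. Unset Printing Implicit Defensive.
Import Order.TTheory GRing.Theory Num.Theory.
Local Open Scope ring_scope.

Section Observables.
Variables (R : realFieldType) (n : nat).
Implicit Types (q : law R n) (v : vec R n).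

Lemma obs_joint0 q y z : obs_joint q y false z = \sum_b q y b false z.
Proof.
rewrite /obs_joint (bigD1 y) //= [X in _ + X]big1 ?addr0 => [|a /negbTE ay].
  by apply: eq_bigr => b _; rewrite eqxx.
by rewrite big1 // => b _; rewrite ay.
Qed.

Lemma obs_joint1 q y z : obs_joint q y true z = \sum_a q a y true z.
Proof.
rewrite /obs_joint; apply: eq_bigr => a _.
by rewrite (bigD1 y) //= eqxx big1 ?addr0 // => b /negbTE ->.
Qed.

Lemma sum_obs_joint q (w : 'I_n -> R) d z :
  \sum_y w y * obs_joint q y d z =
  \sum_a \sum_b w (if d then b else a) * q a b d z.
Proof.
case: d.
  under eq_bigr => y _ do rewrite obs_joint1 mulr_sumr.
  by rewrite exchange_big.
by under eq_bigr => y _ do rewrite obs_joint0 mulr_sumr.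
Qed.

Lemma PZ_obs q z :
  PZ q z = \sum_y (obs_joint q y false z + obs_joint q y true z).
Proof.
have sum_d d : \sum_y obs_joint q y d z = \sum_a \sum_b q a b d z.
  under eq_bigr => y _ do rewrite -[obs_joint _ _ _ _]mul1r.
  by rewrite sum_obs_joint; under eq_bigr => a _ do under eq_bigr => b _ do rewrite mul1r.
rewrite big_split /= !sum_d -big_split; apply: eq_bigr => a _.
by rewrite -big_split; apply: eq_bigr => b _; rewrite big_bool /= addrC.
Qed.

Lemma sum_law_PZ q :
  \sum_a \sum_b \sum_d \sum_z q a b d z = PZ q true + PZ q false.
Proof.
transitivity (\sum_(z : bool) \sum_a \sum_b \sum_d q a b d z); last by rewrite big_bool.
under eq_bigr => a _ do under eq_bigr => b _ do rewrite exchange_big.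
under eq_bigr => a _ do rewrite exchange_big.
by rewrite exchange_big.
Qed.

Lemma dot_pvecE q v :
  dot v (pvec q) = \sum_(z : bool)
    (\sum_a \sum_b (v a false z * q a b false z + v b true z * q a b true z)) / PZ q z.
Proof.
rewrite /dot /pvec exchange_big /=.
under eq_bigr => d _ do rewrite exchange_big /=.
rewrite exchange_big /=; apply: eq_bigr => z _.
have sum_d d : \sum_y v y d z * (obs_joint q y d z / PZ q z) =
    (\sum_a \sum_b v (if d then b else a) d z * q a b d z) / PZ q z.
  rewrite -(sum_obs_joint q (fun y => v y d z)) mulr_suml.
  by apply: eq_bigr => y _; rewrite mulrA.
rewrite big_bool /= !sum_d /= -mulrDl -!big_split /=; congr (_ / _).
by apply: eq_bigr => a _; rewrite -big_split; apply: eq_bigr => b _; rewrite addrC.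
Qed.

Lemma ATE_PY01 (gamma : nat -> R) q :
  ATE gamma q = \sum_a \sum_b PY01 q a b * (gamma b - gamma a).
Proof.
apply: eq_bigr => a _; apply: eq_bigr => b _.
by rewrite /PY01 mulr_suml; apply: eq_bigr => d _; rewrite mulr_suml.
Qed.

Lemma eq_dot v (p1 p2 : vec R n) :
  (forall y d z, p1 y d z = p2 y d z) -> dot v p1 = dot v p2.
Proof.
move=> eq_p; apply: eq_bigr => y _; apply: eq_bigr => d _.
by apply: eq_bigr => z _; rewrite eq_p.
Qed.

Lemma dot_pvec_obs (q1 q : law R n) :
  (forall y d z, obs_joint q1 y d z = obs_joint q y d z) ->
  forall v, dot v (pvec q1) = dot v (pvec q).
Proof.
move=> obs_eq v; have PZ_eq z : PZ q1 z = PZ q z.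
  by rewrite !PZ_obs; apply: eq_bigr => y _; rewrite !obs_eq.
by apply: eq_dot => y d z; rewrite /pvec obs_eq PZ_eq.
Qed.

End Observables.

Section ObservedLaw.
Variables (R : realFieldType) (n : nat) (q : law R n).
Hypothesis q_valid : valid_law q.

Lemma obs_joint_pvec y d z : obs_joint q y d z = PZ q z * pvec q y d z.
Proof. by have [_ _ PZ_gt0 _] := q_valid; rewrite /pvec mulrC divfK ?gt_eqF. Qed.

Lemma pvec_ge0 y d z : 0 <= pvec q y d z.
Proof.
have [q_ge0 _ PZ_gt0 _] := q_valid.
rewrite /pvec divr_ge0 ?(ltW (PZ_gt0 z)) //.
by apply: sumr_ge0 => a _; apply: sumr_ge0 => b _; case: eqP.
Qed.

Lemma pvec_sum1 z : \sum_y (pvec q y false z + pvec q y true z) = 1.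
Proof.
have [_ _ PZ_gt0 _] := q_valid.
under eq_bigr => y _ do rewrite /pvec -mulrDl.
by rewrite -mulr_suml -PZ_obs mulfV ?gt_eqF.
Qed.

Lemma pvec0_le y z : pvec q y false z <= \sum_b PY01 q y b.
Proof.
have [q_ge0 _ PZ_gt0 indep] := q_valid.
rewrite /pvec obs_joint0 ler_pdivrMr // mulr_suml; apply: ler_sum => b _.
by rewrite -indep /PY01Z big_bool /= lerDr.
Qed.

Lemma pvec1_le y z : pvec q y true z <= \sum_a PY01 q a y.
Proof.
have [q_ge0 _ PZ_gt0 indep] := q_valid.
rewrite /pvec obs_joint1 ler_pdivrMr // mulr_suml; apply: ler_sum => a _.
by rewrite -indep /PY01Z big_bool /= lerDl.
Qed.

Lemma instrumental_ineq0 :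
  \sum_y Num.max (pvec q y false false) (pvec q y false true) <= 1.
Proof.
have [_ q_sum1 _ _] := q_valid.
rewrite -q_sum1; apply: ler_sum => y _.
by rewrite ge_max !pvec0_le.
Qed.

Lemma instrumental_ineq1 :
  \sum_y Num.max (pvec q y true false) (pvec q y true true) <= 1.
Proof.
have [_ q_sum1 _ _] := q_valid.
rewrite -q_sum1 exchange_big; apply: ler_sum => y _.
by rewrite ge_max !pvec1_le.
Qed.

End ObservedLaw.

Section WeakDuality.
Variables (R : realFieldType) (n : nat) (gamma : nat -> R).
Hypothesis gamma_mono :
  forall i j : nat, (i <= j)%N -> (j < n.+1)%N -> gamma i <= gamma j.

Definition dual_sign0 (B : bmat n.+1) (al : R) :=
  forall a : 'I_n.+1, if B a false false && B a false true
    then 0 <= gamma 0 + gamma a + al else gamma 0 + gamma a + al <= 0.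

Definition dual_sign1 (B : bmat n.+1) (al : R) :=
  forall b : 'I_n.+1, if B b true false && B b true true
    then gamma b + gamma n + al <= 0 else 0 <= gamma b + gamma n + al.

Lemma uvec_dual_feasible (B : bmat n.+1) (al : R) :
  dual_sign0 B al -> dual_sign1 B al -> forall a b : 'I_n.+1,
    Num.max (uvec gamma B al a false false) (uvec gamma B al b true false)
  + Num.max (uvec gamma B al a false true) (uvec gamma B al b true true)
  <= gamma b - gamma a.
Proof.
move=> sign0 sign1 a b.
have g0b : gamma 0 <= gamma b by apply: gamma_mono.
have gan : gamma a <= gamma n by apply: gamma_mono; [exact: ltn_ord a|].
move: (sign0 a) (sign1 b).
rewrite addr_maxl !addr_maxr !ge_max /uvec.
by case: (B a false false); case: (B a false true);
  case: (B b true false); case: (B b true true) => /= sign_a sign_b;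
  rewrite -!andbA; apply/and4P; split; lra.
Qed.

Lemma S1_dual_sign (B : bmat n.+1) (t : nat) : inS1 B t ->
  dual_sign0 B (- gamma 0 - gamma t) /\ dual_sign1 B (- gamma 0 - gamma t).
Proof.
case=> ht above below split1 _; split=> [a|b].
- case: ifP => [/andP [Ba0 Ba1] | Ba].
  + have ta : (t <= a)%N.
      by rewrite leqNgt; apply/negP => /below; rewrite Ba0 Ba1.
    have := gamma_mono ta (ltn_ord a); lra.
  + have at' : (a <= t)%N.
      apply: ltnW; rewrite ltnNge; apply/negP => /above [Ba0 Ba1].
      by rewrite Ba0 Ba1 in Ba.
    have := gamma_mono at' (ltnW ht); lra.
- case: ifP => [/andP [Bb0 Bb1] | _]; first by move: (split1 b); rewrite Bb0 Bb1.
  have := gamma_mono (leq0n b) (ltn_ord b).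
  have := @gamma_mono t n (ltnW ht) (ltnSn n); lra.
Qed.

Lemma S2_dual_sign (B : bmat n.+1) : inS2 B ->
  dual_sign0 B (- gamma 0 - gamma n) /\ dual_sign1 B (- gamma 0 - gamma n).
Proof.
move=> S2; split=> [a|b].
- have [_ _ below _] := S2 a.
  case: ifP => [/andP [Ba0 Ba1] | _].
  + suff -> : nat_of_ord a = n by lra.
    apply/eqP; rewrite eqn_leq -ltnS ltn_ord /= leqNgt.
    by apply/negP => /below; rewrite Ba0 Ba1.
  + have := @gamma_mono a n (ltn_ord a) (ltnSn n); lra.
- have [_ _ _ above] := S2 b.
  case: ifP => [/andP [Bb0 Bb1] | _].
  + suff -> : nat_of_ord b = 0%N by lra.
    apply/eqP; rewrite -leqn0 leqNgt.
    by apply/negP => /above; rewrite Bb0 Bb1.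
  + have := gamma_mono (leq0n b) (ltn_ord b); lra.
Qed.

Lemma S3_dual_sign (B : bmat n.+1) (t : nat) : inS3 B t ->
  dual_sign0 B (- gamma t - gamma n) /\ dual_sign1 B (- gamma t - gamma n).
Proof.
case=> [[ht1 ht2] below above split0 _]; split=> [a|b].
- case: ifP => [/andP [Ba0 Ba1] | _]; first by move: (split0 a); rewrite Ba0 Ba1.
  have := gamma_mono (leq0n t) (leq_ltn_trans ht2 (ltnSn n)).
  have := @gamma_mono a n (ltn_ord a) (ltnSn n); lra.
- case: ifP => [/andP [Bb0 Bb1] | Bb].
  + have bt : (b <= t)%N.
      by rewrite leqNgt; apply/negP => /above; rewrite Bb0 Bb1.
    have := gamma_mono bt (leq_ltn_trans ht2 (ltnSn n)); lra.
  + have tb : (t <= b)%N.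
      apply: ltnW; rewrite ltnNge; apply/negP => /below [Bb0 Bb1].
      by rewrite Bb0 Bb1 in Bb.
    have := gamma_mono tb (ltn_ord b); lra.
Qed.

Lemma inV_dual_sign (v : vec R n.+1) : inV gamma v ->
  exists B al, [/\ v = uvec gamma B al, dual_sign0 B al & dual_sign1 B al].
Proof.
case=> B [[t [/S1_dual_sign [? ?] ->]] |
          [[/S2_dual_sign [? ?] ->] | [t [/S3_dual_sign [? ?] ->]]]];
  by exists B; eexists.
Qed.

Lemma uvec_le_ATE (q : law R n.+1) (B : bmat n.+1) (al : R) :
  valid_law q -> dual_sign0 B al -> dual_sign1 B al ->
  dot (uvec gamma B al) (pvec q) <= ATE gamma q.
Proof.
case=> q_ge0 _ PZ_gt0 indep sign0 sign1.
set v := uvec gamma B al.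
pose M z (a b : 'I_n.+1) := Num.max (v a false z) (v b true z).
(* By independence the two D-cells of (a, b, z) have total mass PY01 q a b * PZ q z,
   so raising both weights to their maximum bounds the sum. *)
have bound_z z :
    (\sum_a \sum_b (v a false z * q a b false z + v b true z * q a b true z)) / PZ q z
    <= \sum_a \sum_b M z a b * PY01 q a b.
  rewrite ler_pdivrMr // mulr_suml; apply: ler_sum => a _.
  rewrite mulr_suml; apply: ler_sum => b _.
  rewrite -mulrA -indep /PY01Z big_bool /= mulrDr addrC.
  by apply: lerD; apply: ler_wpM2r => //; rewrite /M le_max lexx ?orbT.
rewrite dot_pvecE ATE_PY01 (le_trans (ler_sum _ (fun z _ => bound_z z))) //.
rewrite exchange_big /=; apply: ler_sum => a _.
rewrite exchange_big /=; apply: ler_sum => b _.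
rewrite big_bool /= -mulrDl mulrC ler_wpM2l //.
  by apply: sumr_ge0 => d _; apply: sumr_ge0 => z _.
by rewrite addrC; exact: uvec_dual_feasible.
Qed.

Lemma inV_le_ATE (q : law R n.+1) (v : vec R n.+1) :
  valid_law q -> inV gamma v -> dot v (pvec q) <= ATE gamma q.
Proof. by move=> hq /inV_dual_sign [B [al [-> ? ?]]]; exact: uvec_le_ATE. Qed.

End WeakDuality.

Section IndependentCoupling.
Variables (R : realFieldType) (I : finType) (x y : I -> R).
Hypotheses (x_ge0 : forall i, 0 <= x i) (y_ge0 : forall i, 0 <= y i)
  (sum_xy : \sum_i x i = \sum_i y i).

Definition indep_coupling (a b : I) := x a * y b / \sum_i x i.

Lemma indep_coupling_ge0 a b : 0 <= indep_coupling a b.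
Proof. by rewrite divr_ge0 ?mulr_ge0 ?sumr_ge0. Qed.

Lemma indep_coupling_degenerate :
  \sum_i x i = 0 -> (forall i, x i = 0) /\ (forall i, y i = 0).
Proof.
move=> Sx0; have Sy0 := Sx0; rewrite sum_xy in Sy0.
by split=> i; [apply: (psumr_eq0P _ Sx0) | apply: (psumr_eq0P _ Sy0)].
Qed.

Lemma indep_coupling_row a : \sum_b indep_coupling a b = x a.
Proof.
have [/indep_coupling_degenerate [x0 _] | Sx0] := eqVneq (\sum_i x i) 0.
  by rewrite big1 ?x0 // => b _; rewrite /indep_coupling x0 !mul0r.
by rewrite -mulr_suml -mulr_sumr -sum_xy mulfK.
Qed.

Lemma indep_coupling_col b : \sum_a indep_coupling a b = y b.
Proof.
have [/indep_coupling_degenerate [_ y0] | Sx0] := eqVneq (\sum_i x i) 0.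
  by rewrite big1 ?y0 // => a _; rewrite /indep_coupling y0 mulr0 mul0r.
by rewrite -mulr_suml -mulr_suml mulrAC mulfV ?mul1r.
Qed.

Lemma indep_coupling_diff (w : I -> R) :
  \sum_a \sum_b indep_coupling a b * (w b - w a) = \sum_i (w i * y i - w i * x i).
Proof.
under eq_bigr => a _ do under eq_bigr => b _ do rewrite mulrBr.
under eq_bigr => a _ do rewrite sumrB.
rewrite sumrB exchange_big /= sumrB; congr (_ - _); apply: eq_bigr => i _.
  by rewrite -mulr_suml indep_coupling_col mulrC.
by rewrite -mulr_suml indep_coupling_row mulrC.
Qed.

End IndependentCoupling.

Lemma sum_indicator_ord0 (R : pzSemiRingType) (n : nat) (F : 'I_n.+1 -> R) :
  \sum_(b : 'I_n.+1) ((nat_of_ord b == 0%N)%:R * F b) = F ord0.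
Proof. by rewrite big_ord_recl /= mul1r big1 ?addr0 // => i _; rewrite mul0r. Qed.

Lemma sum_indicator_ord_max (R : pzSemiRingType) (n : nat) (F : 'I_n.+1 -> R) :
  \sum_(b : 'I_n.+1) ((nat_of_ord b == n)%:R * F b) = F ord_max.
Proof.
by rewrite big_ord_recr /= eqxx mul1r big1 ?add0r // => i _; rewrite ltn_eqF ?mul0r.
Qed.

(* A never-taker with Y^(0) = gamma_a is observed in the cell (a, D = 0) under both
   values of Z, so the never-taker mass at a is at most [nt_cap p a]; dually for
   always-takers. *)
Definition nt_cap (R : realFieldType) (n : nat) (p : vec R n) (a : 'I_n) :=
  Num.min (p a false false) (p a false true).
Definition at_cap (R : realFieldType) (n : nat) (p : vec R n) (b : 'I_n) :=
  Num.min (p b true false) (p b true true).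

Section SharpLaw.
Variables (R : realFieldType) (n : nat) (gamma : nat -> R).
Variables (p : vec R n.+1) (pi : bool -> R) (N A : 'I_n.+1 -> R).
Hypotheses (pi_gt0 : forall z, 0 < pi z) (pi_sum1 : pi true + pi false = 1)
  (p_sum1 : forall z, \sum_y (p y false z + p y true z) = 1)
  (N_box : forall a, 0 <= N a <= nt_cap p a) (A_box : forall b, 0 <= A b <= at_cap p b)
  (balanced : \sum_i (N i - A i - p i false false + p i true true) = 0).

Definition complier0 a := p a false false - N a.
Definition complier1 b := p b true true - A b.
Definition defier0 a := p a false true - N a.
Definition defier1 b := p b true false - A b.

Definition compliers := indep_coupling complier0 complier1.
Definition defiers := indep_coupling defier0 defier1.

(* Never-takers with Y^(0) = gamma_a get the lowest Y^(1) = gamma_0; always-takers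
   with Y^(1) = gamma_b get the highest Y^(0) = gamma_n. *)
Definition strata (a b : 'I_n.+1) :=
  (nat_of_ord b == 0%N)%:R * N a + (nat_of_ord a == n)%:R * A b
  + compliers a b + defiers a b.

Definition strata_at (z : bool) (a b : 'I_n.+1) (d : bool) : R :=
  match z, d with
  | false, false => (nat_of_ord b == 0%N)%:R * N a + compliers a b
  | false, true => (nat_of_ord a == n)%:R * A b + defiers a b
  | true, false => (nat_of_ord b == 0%N)%:R * N a + defiers a b
  | true, true => (nat_of_ord a == n)%:R * A b + compliers a b
  end.

Definition sharp_law : law R n.+1 := fun a b d z => pi z * strata_at z a b d.

Definition sharp_value := \sum_(i : 'I_n.+1)
  (N i * (gamma 0 + gamma i) - A i * (gamma i + gamma n)
   + gamma i * (p i true false + p i true true)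
   - gamma i * (p i false false + p i false true)).

Lemma N_le a : N a <= p a false false /\ N a <= p a false true.
Proof. by have /andP [_] := N_box a; rewrite le_min => /andP. Qed.

Lemma A_le b : A b <= p b true false /\ A b <= p b true true.
Proof. by have /andP [_] := A_box b; rewrite le_min => /andP. Qed.

Lemma complier0_ge0 a : 0 <= complier0 a.
Proof. by rewrite subr_ge0; case: (N_le a). Qed.
Lemma complier1_ge0 b : 0 <= complier1 b.
Proof. by rewrite subr_ge0; case: (A_le b). Qed.
Lemma defier0_ge0 a : 0 <= defier0 a.
Proof. by rewrite subr_ge0; case: (N_le a). Qed.
Lemma defier1_ge0 b : 0 <= defier1 b.
Proof. by rewrite subr_ge0; case: (A_le b). Qed.

Lemma sum_compliers : \sum_i complier0 i = \sum_i complier1 i.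
Proof.
apply/eqP; rewrite -subr_eq0 -sumrB -oppr_eq0 -sumrN -[X in _ == X]balanced.
by apply/eqP/eq_bigr => i _; rewrite /complier0 /complier1; ring.
Qed.

Lemma sum_defiers : \sum_i defier0 i = \sum_i defier1 i.
Proof.
apply/eqP; rewrite -subr_eq0 -sumrB.
have -> : \sum_i (defier0 i - defier1 i) =
    \sum_i (p i false true + p i true true) - \sum_i (p i false false + p i true false)
    - \sum_i (N i - A i - p i false false + p i true true).
  by rewrite -!sumrB; apply: eq_bigr => i _; rewrite /defier0 /defier1; ring.
by rewrite balanced !p_sum1 subr0 subrr.
Qed.

Lemma compliers_ge0 a b : 0 <= compliers a b.
Proof. exact: indep_coupling_ge0 complier0_ge0 complier1_ge0 a b. Qed.
Lemma defiers_ge0 a b : 0 <= defiers a b.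
Proof. exact: indep_coupling_ge0 defier0_ge0 defier1_ge0 a b. Qed.

Lemma compliers_row a : \sum_b compliers a b = complier0 a.
Proof. exact: indep_coupling_row complier0_ge0 complier1_ge0 sum_compliers a. Qed.
Lemma compliers_col b : \sum_a compliers a b = complier1 b.
Proof. exact: indep_coupling_col complier0_ge0 complier1_ge0 sum_compliers b. Qed.
Lemma defiers_row a : \sum_b defiers a b = defier0 a.
Proof. exact: indep_coupling_row defier0_ge0 defier1_ge0 sum_defiers a. Qed.
Lemma defiers_col b : \sum_a defiers a b = defier1 b.
Proof. exact: indep_coupling_col defier0_ge0 defier1_ge0 sum_defiers b. Qed.

Lemma obs_sharp_law y d z : obs_joint sharp_law y d z = pi z * p y d z.
Proof.
case: d.
- rewrite obs_joint1 /sharp_law -mulr_sumr; congr (_ * _).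
  case: z => /=; rewrite big_split /= sum_indicator_ord_max /=.
  + by rewrite compliers_col /complier1; ring.
  + by rewrite defiers_col /defier1; ring.
- rewrite obs_joint0 /sharp_law -mulr_sumr; congr (_ * _).
  case: z => /=; rewrite big_split /= (sum_indicator_ord0 (fun _ => N y)) /=.
  + by rewrite defiers_row /defier0; ring.
  + by rewrite compliers_row /complier0; ring.
Qed.

Lemma PY01Z_sharp_law a b z : PY01Z sharp_law a b z = pi z * strata a b.
Proof.
rewrite /PY01Z big_bool /sharp_law /= -mulrDr; congr (_ * _).
by case: z; rewrite /strata /=; ring.
Qed.

Lemma PY01_sharp_law a b : PY01 sharp_law a b = strata a b.
Proof.
rewrite /PY01 exchange_big /=.
under eq_bigr => z _ do rewrite -/(PY01Z sharp_law a b z) PY01Z_sharp_law.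
by rewrite -mulr_suml big_bool /= pi_sum1 mul1r.
Qed.

Lemma PZ_sharp_law z : PZ sharp_law z = pi z.
Proof.
rewrite PZ_obs.
under eq_bigr => y _ do rewrite !obs_sharp_law -mulrDr.
by rewrite -mulr_sumr p_sum1 mulr1.
Qed.

Lemma valid_sharp_law : valid_law sharp_law.
Proof.
split.
- move=> a b d z; rewrite /sharp_law mulr_ge0 ?(ltW (pi_gt0 z)) //.
  have /andP [N_ge0 _] := N_box a; have /andP [A_ge0 _] := A_box b.
  by case: z; case: d; apply: addr_ge0; rewrite ?compliers_ge0 ?defiers_ge0 ?mulr_ge0 ?ler0n.
- by rewrite (sum_law_PZ sharp_law) !PZ_sharp_law.
- by move=> z; rewrite PZ_sharp_law.
- by move=> a b z; rewrite PY01Z_sharp_law PY01_sharp_law PZ_sharp_law mulrC.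
Qed.

Lemma ATE_sharp_law : ATE gamma sharp_law = sharp_value.
Proof.
have never_takers :
    \sum_(a : 'I_n.+1) \sum_(b : 'I_n.+1) (nat_of_ord b == 0%N)%:R * N a * (gamma b - gamma a)
    = \sum_(i : 'I_n.+1) N i * (gamma 0 - gamma i).
  apply: eq_bigr => a _.
  rewrite -(sum_indicator_ord0 (fun b : 'I_n.+1 => N a * (gamma b - gamma a))).
  by apply: eq_bigr => b _; rewrite mulrA.
have always_takers :
    \sum_(a : 'I_n.+1) \sum_(b : 'I_n.+1) (nat_of_ord a == n)%:R * A b * (gamma b - gamma a)
    = \sum_(i : 'I_n.+1) A i * (gamma i - gamma n).
  rewrite exchange_big /=; apply: eq_bigr => b _.
  rewrite -(sum_indicator_ord_max (fun a : 'I_n.+1 => A b * (gamma b - gamma a))).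
  by apply: eq_bigr => a _; rewrite mulrA.
rewrite ATE_PY01.
under eq_bigr => a _ do under eq_bigr => b _ do
  rewrite PY01_sharp_law /strata /compliers /defiers !mulrDl.
under eq_bigr => a _ do rewrite !big_split /=.
rewrite !big_split /= never_takers always_takers.
rewrite (indep_coupling_diff complier0_ge0 complier1_ge0 sum_compliers).
rewrite (indep_coupling_diff defier0_ge0 defier1_ge0 sum_defiers).
rewrite -!big_split /=; apply: eq_bigr => i _.
by rewrite /complier0 /complier1 /defier0 /defier1; ring.
Qed.

End SharpLaw.

Section ComplementarySlackness.
Variables (R : realFieldType) (n : nat) (gamma : nat -> R).
Variables (p : vec R n.+1) (N A : 'I_n.+1 -> R) (both0 both1 : 'I_n.+1 -> bool) (al : R).

(* Off [both0 i], only the larger of p_{i00}, p_{i01} is marked, so that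
   u_{i00} p_{i00} + u_{i01} p_{i01} involves their minimum [nt_cap p i]. *)
Definition slack_bmat : bmat n.+1 := fun i d z =>
  match d, z with
  | false, false => both0 i || (p i false true <= p i false false)
  | false, true => both0 i || ~~ (p i false true <= p i false false)
  | true, false => both1 i || (p i true true <= p i true false)
  | true, true => both1 i || ~~ (p i true true <= p i true false)
  end.

Hypotheses
  (balanced : \sum_i (N i - A i - p i false false + p i true true) = 0)
  (N_slack : forall a, if both0 a then N a * (gamma 0 + gamma a + al) = 0
                       else N a = nt_cap p a)
  (A_slack : forall b, if both1 b then A b * (gamma b + gamma n + al) = 0
                       else A b = at_cap p b).

Lemma dot_slack_uvec : dot (uvec gamma slack_bmat al) p = sharp_value gamma p N A.
Proof.
rewrite /dot /sharp_value.
transitivity (\sum_(i : 'I_n.+1)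
   ((N i * (gamma 0 + gamma i) - A i * (gamma i + gamma n)
     + gamma i * (p i true false + p i true true)
     - gamma i * (p i false false + p i false true))
    + al * (N i - A i - p i false false + p i true true))); last first.
  by rewrite big_split /= -mulr_sumr balanced mulr0 addr0.
apply: eq_bigr => y _; rewrite !big_bool /=.
have untreated : uvec gamma slack_bmat al y false true * p y false true
    + uvec gamma slack_bmat al y false false * p y false false
    = N y * (gamma 0 + gamma y + al) - gamma y * p y false true
      - (gamma y + al) * p y false false.
  move: (N_slack y); rewrite /uvec /slack_bmat /nt_cap.
  case: (both0 y) => /= [-> | ->]; first ring.
  by case: (leP (p y false true) (p y false false)) => _ /=; ring.
have treated : uvec gamma slack_bmat al y true true * p y true true
    + uvec gamma slack_bmat al y true false * p y true false
    = - A y * (gamma y + gamma n + al) + gamma y * p y true false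
      + (gamma y + al) * p y true true.
  move: (A_slack y); rewrite /uvec /slack_bmat /at_cap.
  case: (both1 y) => /= [slack | ->]; first by rewrite mulNr slack; ring.
  by case: (leP (p y true true) (p y true false)) => _ /=; ring.
by rewrite untreated treated; ring.
Qed.

End ComplementarySlackness.

Section GreedyFill.
Variable R : realFieldType.

Lemma partial_sum_mono (f : nat -> R) : (forall i, 0 <= f i) ->
  forall k j, (k <= j)%N -> \sum_(i < k) f i <= \sum_(i < j) f i.
Proof.
move=> f_ge0 k j kj; rewrite -(subnKC kj).
elim: (j - k)%N => [|d IH]; first by rewrite addn0.
by rewrite addnS big_ord_recr /= -[X in X <= _]addr0; apply: lerD.
Qed.

Lemma clamp_add (T s f : R) : 0 <= f -> 0 <= T ->
  Num.min T s + Num.max 0 (Num.min f (T - s)) = Num.min T (s + f).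
Proof.
move=> f_ge0 T_ge0; case: (leP T s) => ?; case: (leP f (T - s)) => ?;
  case: (leP 0 f) => ?; case: (leP 0 (T - s)) => ?; case: (leP T (s + f)) => ?; lra.
Qed.

Lemma clampP (T s f : R) : 0 <= f ->
  [/\ 0 <= Num.max 0 (Num.min f (T - s)) <= f,
      f <= T - s -> Num.max 0 (Num.min f (T - s)) = f
    & T - s <= 0 -> Num.max 0 (Num.min f (T - s)) = 0].
Proof.
move=> f_ge0; case: (leP f (T - s)) => ?; case: (leP 0 f) => ?; case: (leP 0 (T - s)) => ?;
  split; rewrite ?le_max ?lexx //=; move=> *; lra.
Qed.

Lemma greedy_fill (m : nat) (f : nat -> R) (T : R) :
  (forall i, 0 <= f i) -> 0 <= T -> T <= \sum_(i < m) f i -> (0 < m)%N ->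
  exists (g : nat -> R) (t : nat),
    [/\ (t < m)%N, forall i, 0 <= g i <= f i, \sum_(i < m) g i = T,
        forall i, (i < t)%N -> g i = f i
      & forall i, (t < i)%N -> (i < m)%N -> g i = 0].
Proof.
move=> f_ge0 T_ge0 T_le m_gt0.
pose S k := \sum_(i < k) f i.
pose g i := Num.max 0 (Num.min (f i) (T - S i)).
have sum_g k : \sum_(i < k) g i = Num.min T (S k).
  elim: k => [|k IH]; first by rewrite /S !big_ord0 /=; case: (leP T 0) => ?; lra.
  by rewrite big_ord_recr /= IH /S big_ord_recr /= -/(S k) /g clamp_add.
have exP : exists k, (m.-1 <= k)%N || (T < S k.+1) by exists m.-1; rewrite leqnn.
case: (ex_minnP exP) => t Pt t_min.
exists g, t; split.
- by have := t_min m.-1; rewrite leqnn => /(_ isT); lia.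
- by move=> i; have [] := clampP T (S i) (f_ge0 i).
- by rewrite sum_g /S; case: (leP T (\sum_(i < m) f i)) => ?; lra.
- move=> i it.
  have : ~~ ((m.-1 <= i)%N || (T < S i.+1)).
    by apply/negP => /t_min; rewrite leqNgt it.
  rewrite negb_or -leNgt /S big_ord_recr /= -/(S i) => /andP [_ T_ge].
  by have [_ saturated _] := clampP T (S i) (f_ge0 i); rewrite /g saturated //; lra.
- move=> i ti im.
  case/orP: Pt => [|T_lt]; first by lia.
  have S_le : S t.+1 <= S i by apply: partial_sum_mono.
  by have [_ _ exhausted] := clampP T (S i) (f_ge0 i); rewrite /g exhausted //; lra.
Qed.

Lemma greedy_fill_rev (m : nat) (f : nat -> R) (T : R) :
  (forall i, 0 <= f i) -> 0 <= T -> T <= \sum_(i < m) f i -> (0 < m)%N ->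
  exists (g : nat -> R) (t : nat),
    [/\ (t < m)%N, forall i, (i < m)%N -> 0 <= g i <= f i, \sum_(i < m) g i = T,
        forall i, (t < i)%N -> (i < m)%N -> g i = f i
      & forall i, (i < t)%N -> g i = 0].
Proof.
move=> f_ge0 T_ge0 T_le m_gt0.
have sum_rev F : \sum_(i < m) F (m.-1 - i)%N = \sum_(i < m) F i :> R.
  rewrite -(big_mkord xpredT F) big_rev_mkord subn0; apply: eq_bigr => i _.
  by congr F; lia.
have T_le_rev : T <= \sum_(i < m) f (m.-1 - i)%N by rewrite sum_rev.
have [g [t [tm g_box g_sum g_below g_above]]] :=
  greedy_fill (fun i => f_ge0 (m.-1 - i)%N) T_ge0 T_le_rev m_gt0.
have revK i : (i < m)%N -> (m.-1 - (m.-1 - i))%N = i by lia.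
exists (fun i => g (m.-1 - i)%N), (m.-1 - t)%N; split.
- lia.
- by move=> i im; have := g_box (m.-1 - i)%N; rewrite revK.
- by rewrite (sum_rev g).
- by move=> i ti im; rewrite g_below ?revK //; lia.
- by move=> i it; apply: g_above; lia.
Qed.

End GreedyFill.

Lemma sum_gap_gt0 (R : realFieldType) (I : finType) (u m x : I -> R) :
  \sum_i u i < \sum_i m i -> (forall i, m i <= x i) -> 0 < \sum_i (x i - u i).
Proof.
move=> lt_um le_mx; have : \sum_i m i <= \sum_i x i by apply: ler_sum.
by rewrite sumrB; lra.
Qed.

Lemma ler_sum_eq (R : realFieldType) (I : finType) (u w : I -> R) :
  (forall i, u i <= w i) -> \sum_i u i = \sum_i w i -> forall i, u i = w i.
Proof.
move=> le_uw sum_eq i; apply/eqP; rewrite eq_sym -subr_eq0; apply/eqP.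
apply: (@psumr_eq0P _ _ xpredT (fun i => w i - u i)) => // [j _|]; first by rewrite subr_ge0.
by rewrite sumrB sum_eq subrr.
Qed.

Section Attainment.
Variables (R : realFieldType) (n : nat) (gamma : nat -> R).
Variables (p : vec R n.+1) (N A : 'I_n.+1 -> R).
Hypotheses (p_sum1 : forall z, \sum_y (p y false z + p y true z) = 1)
  (balanced : \sum_i (N i - A i - p i false false + p i true true) = 0).

Lemma nt_cap_le a : nt_cap p a <= p a false false /\ nt_cap p a <= p a false true.
Proof. by rewrite /nt_cap !ge_min !lexx orbT. Qed.

Lemma at_cap_le b : at_cap p b <= p b true false /\ at_cap p b <= p b true true.
Proof. by rewrite /at_cap !ge_min !lexx orbT. Qed.

(* Otherwise A = at_cap empties the defier (resp. complier) margin at D = 1, and the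
   balance then forces N to fill the corresponding margin at D = 0. *)
Lemma treated_order_mixed :
  (forall b, A b = at_cap p b) -> \sum_i N i < \sum_i nt_cap p i ->
  (exists i, p i true true <= p i true false) /\
  (exists j, ~~ (p j true true <= p j true false)).
Proof.
move=> A_full N_short; split.
- have [i|no_i] := pickP (fun i => p i true true <= p i true false); first by exists i.
  have := sum_gap_gt0 N_short (fun a => proj2 (nt_cap_le a)).
  rewrite -/(\sum_i defier0 p N i) (sum_defiers p_sum1 balanced) big1 ?ltxx // => b _.
  by rewrite /defier1 A_full /at_cap min_l ?subrr // ltW // ltNge no_i.
- have [j|no_j] := pickP (fun j => ~~ (p j true true <= p j true false)); first by exists j.
  have := sum_gap_gt0 N_short (fun a => proj1 (nt_cap_le a)).
  rewrite -/(\sum_i complier0 p N i) (sum_compliers balanced) big1 ?ltxx // => b _.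
  by move/negbFE: (no_j b) => le_b; rewrite /complier1 A_full /at_cap min_r ?subrr.
Qed.

Lemma untreated_order_mixed :
  (forall a, N a = nt_cap p a) -> \sum_i A i < \sum_i at_cap p i ->
  (exists i, p i false true <= p i false false) /\
  (exists j, ~~ (p j false true <= p j false false)).
Proof.
move=> N_full A_short; split.
- have [i|no_i] := pickP (fun i => p i false true <= p i false false); first by exists i.
  have := sum_gap_gt0 A_short (fun b => proj2 (at_cap_le b)).
  rewrite -/(\sum_i complier1 p A i) -(sum_compliers balanced) big1 ?ltxx // => a _.
  by rewrite /complier0 N_full /nt_cap min_l ?subrr // ltW // ltNge no_i.
- have [j|no_j] := pickP (fun j => ~~ (p j false true <= p j false false)); first by exists j.
  have := sum_gap_gt0 A_short (fun b => proj1 (at_cap_le b)).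
  rewrite -/(\sum_i defier1 p A i) -(sum_defiers p_sum1 balanced) big1 ?ltxx // => a _.
  by move/negbFE: (no_j a) => le_a; rewrite /defier0 N_full /nt_cap min_r ?subrr.
Qed.

Lemma attains_S1 t : (t < n)%N ->
  (forall a : 'I_n.+1, (a < t)%N -> N a = nt_cap p a) ->
  (forall a : 'I_n.+1, (t < a)%N -> N a = 0) ->
  (forall b, A b = at_cap p b) -> \sum_i N i < \sum_i nt_cap p i ->
  exists2 v, inV gamma v & dot v p = sharp_value gamma p N A.
Proof.
move=> tn N_below N_above A_full N_short.
pose both0 (a : 'I_n.+1) := (t <= a)%N.
pose both1 (b : 'I_n.+1) := false.
exists (uvec gamma (slack_bmat p both0 both1) (- gamma 0 - gamma t)).
  exists (slack_bmat p both0 both1); left; exists t; split => //.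
  rewrite /slack_bmat /both0 /both1; split => //.
  - by move=> i ti; rewrite ti.
  - by move=> i it; rewrite leqNgt it /=; case: (_ <= _).
  - by move=> i /=; case: (_ <= _).
  - have [[i le_i] [j lt_j]] := treated_order_mixed A_full N_short.
    by exists i, j; rewrite /= le_i lt_j.
apply: (dot_slack_uvec balanced) => [a|b]; last exact: A_full.
rewrite /both0; case: (ltngtP t a) => [ta | at' | ->] /=.
- by rewrite N_above // mul0r.
- exact: N_below.
- ring.
Qed.

Lemma attains_S2 :
  (forall a : 'I_n.+1, (a < n)%N -> N a = nt_cap p a) ->
  (forall b : 'I_n.+1, (0 < b)%N -> A b = at_cap p b) ->
  exists2 v, inV gamma v & dot v p = sharp_value gamma p N A.
Proof.
move=> N_full A_full.
pose both0 (a : 'I_n.+1) := nat_of_ord a == n.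
pose both1 (b : 'I_n.+1) := nat_of_ord b == 0%N.
exists (uvec gamma (slack_bmat p both0 both1) (- gamma 0 - gamma n)).
  exists (slack_bmat p both0 both1); right; left; split => // i.
  rewrite /slack_bmat /both0 /both1; split => /=.
  - by move=> ->; rewrite eqxx.
  - by move=> ->; rewrite eqxx.
  - by move=> i_lt; rewrite (ltn_eqF i_lt) /=; case: (_ <= _).
  - by move=> i_gt; rewrite (gtn_eqF i_gt) /=; case: (_ <= _).
apply: (dot_slack_uvec balanced) => [a|b].
- rewrite /both0; case: eqP => [-> | a_n]; first ring.
  by apply: N_full; have := ltn_ord a; lia.
- rewrite /both1; case: eqP => [-> | b0]; first ring.
  by apply: A_full; lia.
Qed.

Lemma attains_S3 t : (0 < t)%N -> (t <= n)%N -> (forall a, N a = nt_cap p a) ->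
  (forall b : 'I_n.+1, (t < b)%N -> A b = at_cap p b) ->
  (forall b : 'I_n.+1, (b < t)%N -> A b = 0) -> \sum_i A i < \sum_i at_cap p i ->
  exists2 v, inV gamma v & dot v p = sharp_value gamma p N A.
Proof.
move=> t_gt0 tn N_full A_above A_below A_short.
pose both0 (a : 'I_n.+1) := false.
pose both1 (b : 'I_n.+1) := (b <= t)%N.
exists (uvec gamma (slack_bmat p both0 both1) (- gamma t - gamma n)).
  exists (slack_bmat p both0 both1); right; right; exists t; split => //.
  rewrite /slack_bmat /both0 /both1; split; first by split.
  - by move=> i it; rewrite it.
  - by move=> i ti; rewrite leqNgt ti /=; case: (_ <= _).
  - by move=> i /=; case: (_ <= _).
  - have [[i le_i] [j lt_j]] := untreated_order_mixed N_full A_short.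
    by exists i, j; rewrite /= le_i lt_j.
apply: (dot_slack_uvec balanced) => [a|b]; first exact: N_full.
rewrite /both1; case: (ltngtP b t) => [bt | tb | ->] /=.
- by rewrite A_below // mul0r.
- exact: A_above.
- ring.
Qed.

End Attainment.

Section Selection.
Variables (R : realFieldType) (n : nat) (gamma : nat -> R) (p : vec R n.+1).
Hypotheses (p_ge0 : forall y d z, 0 <= p y d z)
  (p_sum1 : forall z, \sum_(y < n.+1) (p y false z + p y true z) = 1)
  (iv_ineq0 : \sum_(y < n.+1) Num.max (p y false false) (p y false true) <= 1)
  (iv_ineq1 : \sum_(y < n.+1) Num.max (p y true false) (p y true true) <= 1).

Definition sharp_strata (N A : 'I_n.+1 -> R) :=
  [/\ forall a, 0 <= N a <= nt_cap p a, forall b, 0 <= A b <= at_cap p b,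
      \sum_i (N i - A i - p i false false + p i true true) = 0
    & exists2 v, inV gamma v & dot v p = sharp_value gamma p N A].

Lemma nt_cap_ge0 a : 0 <= nt_cap p a. Proof. by rewrite le_min !p_ge0. Qed.
Lemma at_cap_ge0 b : 0 <= at_cap p b. Proof. by rewrite le_min !p_ge0. Qed.

Lemma sum_nt_cap_ge : \sum_i p i false false - \sum_i p i true true <= \sum_i nt_cap p i.
Proof.
have := p_sum1 true; rewrite big_split /= => sum1.
have : \sum_(i < n.+1) p i false false + \sum_(i < n.+1) p i false true
    = \sum_(i < n.+1) nt_cap p i + \sum_(i < n.+1) Num.max (p i false false) (p i false true).
  by rewrite -!big_split /=; apply: eq_bigr => i _; rewrite /nt_cap addr_min_max.
by move: iv_ineq0; lra.
Qed.

Lemma sum_at_cap_ge : \sum_i p i true true - \sum_i p i false false <= \sum_i at_cap p i.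
Proof.
have := p_sum1 false; rewrite big_split /= => sum1.
have : \sum_(i < n.+1) p i true false + \sum_(i < n.+1) p i true true
    = \sum_(i < n.+1) at_cap p i + \sum_(i < n.+1) Num.max (p i true false) (p i true true).
  by rewrite -!big_split /=; apply: eq_bigr => i _; rewrite /at_cap addr_min_max.
by move: iv_ineq1; lra.
Qed.

Lemma balancedE (N A : 'I_n.+1 -> R) :
  \sum_i (N i - A i - p i false false + p i true true)
  = \sum_i N i - \sum_i A i - \sum_i p i false false + \sum_i p i true true.
Proof. by rewrite big_split /= !sumrB. Qed.

Lemma sharp_strata_full_treated :
  \sum_i p i false false - \sum_i p i true true + \sum_i at_cap p i <= \sum_i nt_cap p i ->
  exists N A, sharp_strata N A.
Proof.
set T := _ + _ => T_le.
have T_ge0 : 0 <= T by have := sum_at_cap_ge; rewrite /T; lra.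
have T_le_sum : T <= \sum_(i < n.+1) nt_cap p (inord i).
  by under eq_bigr do rewrite inord_val.
have [g [t [tn g_box g_sum g_below g_above]]] :=
  greedy_fill (fun i => nt_cap_ge0 (inord i)) T_ge0 T_le_sum (ltn0Sn n).
have N_box (a : 'I_n.+1) : 0 <= g a <= nt_cap p a by have := g_box a; rewrite inord_val.
have bal : \sum_(i < n.+1) (g i - at_cap p i - p i false false + p i true true) = 0.
  by rewrite balancedE g_sum /T; lra.
exists (fun a : 'I_n.+1 => g a), (at_cap p); split => // [b|].
  by rewrite lexx at_cap_ge0.
have [/andP [t_lt N_short] | not_S1] :=
  boolP ((t < n)%N && (\sum_(i : 'I_n.+1) g i < \sum_i nt_cap p i)).
  apply: (attains_S1 gamma p_sum1 bal t_lt) => // a ?.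
    by rewrite g_below // inord_val.
  exact: g_above.
apply: (attains_S2 gamma bal) => // a a_lt.
case: (ltnP t n) not_S1 => [t_lt | t_ge] /=.
  rewrite -leNgt => N_full.
  have g_le (i : 'I_n.+1) : g i <= nt_cap p i by case/andP: (N_box i).
  apply: (ler_sum_eq g_le).
  by apply/eqP; rewrite eq_le N_full andbT; apply: ler_sum => i _.
by move=> _; rewrite g_below ?inord_val //; apply: leq_trans a_lt t_ge.
Qed.

Lemma sharp_strata_full_untreated :
  \sum_i nt_cap p i < \sum_i p i false false - \sum_i p i true true + \sum_i at_cap p i ->
  exists N A, sharp_strata N A.
Proof.
move=> nt_cap_lt.
set T := \sum_i nt_cap p i - (\sum_i p i false false - \sum_i p i true true).
have T_ge0 : 0 <= T by have := sum_nt_cap_ge; rewrite /T; lra.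
have T_le_sum : T <= \sum_(i < n.+1) at_cap p (inord i).
  by under eq_bigr do rewrite inord_val; rewrite /T; lra.
have [g [t [tn g_box g_sum g_above g_below]]] :=
  greedy_fill_rev (fun i => at_cap_ge0 (inord i)) T_ge0 T_le_sum (ltn0Sn n).
have A_box (b : 'I_n.+1) : 0 <= g b <= at_cap p b.
  by have := g_box b (ltn_ord b); rewrite inord_val.
have bal : \sum_(i < n.+1) (nt_cap p i - g i - p i false false + p i true true) = 0.
  by rewrite balancedE g_sum /T; lra.
exists (nt_cap p), (fun b : 'I_n.+1 => g b); split => // [a|].
  by rewrite lexx nt_cap_ge0.
have [t0 | t_gt0] := posnP t.
  apply: (attains_S2 gamma bal) => // b b_gt0.
  by rewrite g_above ?inord_val // t0.
apply: (attains_S3 gamma p_sum1 bal t_gt0) => //.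
- by move=> b tb; rewrite g_above ?inord_val.
- by move=> b bt; rewrite g_below.
- by rewrite g_sum /T; lra.
Qed.

Lemma exists_sharp_strata : exists N A, sharp_strata N A.
Proof.
case: (leP (\sum_i p i false false - \sum_i p i true true + \sum_i at_cap p i)
           (\sum_i nt_cap p i)).
  exact: sharp_strata_full_treated.
exact: sharp_strata_full_untreated.
Qed.

End Selection.

Lemma sharp_lower_bound (R : realFieldType) (n : nat) (gamma : nat -> R)
  (gamma_mono : forall i j : nat, (i <= j)%N -> (j < n.+1)%N -> gamma i <= gamma j)
  (q : law R n.+1) : valid_law q ->
  exists L : R,
    [/\ is_max (@inV R n.+1 gamma) (fun v => dot v (pvec q)) L,
        L <= ATE gamma q
      & exists q1 : law R n.+1, [/\ valid_law q1,
            (forall y d z, obs_joint q1 y d z = obs_joint q y d z)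
          & ATE gamma q1 = L]].
Proof.
move=> q_valid; have [_ q_sum1 PZ_gt0 _] := q_valid.
have p_sum1 := pvec_sum1 q_valid.
have [N [A [N_box A_box balanced [v v_in_V v_val]]]] :=
  exists_sharp_strata gamma (pvec_ge0 q_valid) p_sum1
    (instrumental_ineq0 q_valid) (instrumental_ineq1 q_valid).
have PZ_sum1 : PZ q true + PZ q false = 1 by rewrite -sum_law_PZ.
pose q1 := sharp_law (pvec q) (PZ q) N A.
have q1_obs y d z : obs_joint q1 y d z = obs_joint q y d z.
  by rewrite obs_sharp_law // obs_joint_pvec.
have q1_valid : valid_law q1 by exact: valid_sharp_law.
have q1_ATE : ATE gamma q1 = sharp_value gamma (pvec q) N A by exact: ATE_sharp_law.
exists (dot v (pvec q)); split.
- split=> [|w w_in_V]; first by exists v.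
  by rewrite v_val -q1_ATE -(dot_pvec_obs q1_obs); apply: inV_le_ATE.
- exact: inV_le_ATE.
- by exists q1; rewrite v_val.
Qed.

Section Swap.
Variables (R : realFieldType) (n : nat).
Implicit Type q : law R n.

Definition swap_law q : law R n := fun a b d z => q b a (~~ d) z.

Lemma sum_bool_negb (F : bool -> R) : \sum_(d : bool) F (~~ d) = \sum_(d : bool) F d.
Proof. by rewrite !big_bool /= addrC. Qed.

Lemma PZ_swap q z : PZ (swap_law q) z = PZ q z.
Proof.
rewrite /PZ /swap_law exchange_big /=; apply: eq_bigr => b _; apply: eq_bigr => a _.
exact: (sum_bool_negb (fun d => q b a d z)).
Qed.

Lemma PY01Z_swap q a b z : PY01Z (swap_law q) a b z = PY01Z q b a z.
Proof. exact: (sum_bool_negb (fun d => q b a d z)). Qed.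

Lemma PY01_swap q a b : PY01 (swap_law q) a b = PY01 q b a.
Proof. exact: (sum_bool_negb (fun d => \sum_z q b a d z)). Qed.

Lemma valid_swap q : valid_law q -> valid_law (swap_law q).
Proof.
case=> q_ge0 q_sum1 PZ_gt0 indep; split.
- by move=> *; apply: q_ge0.
- by rewrite (sum_law_PZ (swap_law q)) !PZ_swap -sum_law_PZ.
- by move=> z; rewrite PZ_swap.
- by move=> a b z; rewrite PY01Z_swap PY01_swap PZ_swap.
Qed.

Lemma obs_swap q y d z : obs_joint (swap_law q) y d z = obs_joint q y (~~ d) z.
Proof. by case: d; rewrite ?obs_joint0 ?obs_joint1. Qed.

Lemma pvec_swap q y d z : pvec (swap_law q) y d z = pbar (pvec q) y d z.
Proof. by rewrite /pvec /pbar obs_swap PZ_swap. Qed.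

Lemma ATE_swap (gamma : nat -> R) q : ATE gamma (swap_law q) = - ATE gamma q.
Proof.
rewrite !ATE_PY01 exchange_big /= -sumrN; apply: eq_bigr => b _.
rewrite -sumrN; apply: eq_bigr => a _; rewrite PY01_swap; ring.
Qed.

End Swap.

Lemma eq_is_max (R : realFieldType) (n : nat) (P : vec R n -> Prop) (f g : vec R n -> R) m :
  f =1 g -> is_max P f m -> is_max P g m.
Proof.
move=> eq_fg [[v [Pv fv]] f_le]; split; first by exists v; rewrite -eq_fg.
by move=> w Pw; rewrite -eq_fg; apply: f_le.
Qed.

Theorem theorem3 (R : realFieldType) (n : nat) (gamma : nat -> R)
  (hn : (0 < n)%N)
  (hgamma : forall i j : nat, (i < j)%N -> (j < n)%N -> gamma i < gamma j)
  (q : law R n) (hq : valid_law q) :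
  exists L U : R,
    [/\ is_max (@inV R n gamma) (fun v => dot v (pvec q)) L,
        is_max (@inV R n gamma) (fun v => dot v (pbar (pvec q))) U,
        L <= ATE gamma q <= - U,
        (exists q1 : law R n, [/\ valid_law q1,
            (forall y d z, obs_joint q1 y d z = obs_joint q y d z)
          & ATE gamma q1 = L])
      & (exists q2 : law R n, [/\ valid_law q2,
            (forall y d z, obs_joint q2 y d z = obs_joint q y d z)
          & ATE gamma q2 = - U])].
Proof.
case: n hn q hq hgamma => [//|n] _ q hq hgamma.
have gamma_mono i j : (i <= j)%N -> (j < n.+1)%N -> gamma i <= gamma j.
  by rewrite leq_eqVlt => /orP [/eqP -> // | lt_ij /(hgamma _ _ lt_ij) /ltW].
have [L [L_max L_le [q1 [q1_valid q1_obs q1_ATE]]]] := sharp_lower_bound gamma_mono hq.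
have [U [U_max U_le [q2 [q2_valid q2_obs q2_ATE]]]] :=
  sharp_lower_bound gamma_mono (valid_swap hq).
exists L, U; split.
- exact: L_max.
- by apply: eq_is_max U_max => v; apply: eq_dot => y d z; rewrite pvec_swap.
- by rewrite L_le lerNr -ATE_swap.
- by exists q1.
- exists (swap_law q2); split.
  + exact: valid_swap.
  + by move=> y d z; rewrite obs_swap q2_obs obs_swap negbK.
  + by rewrite ATE_swap q2_ATE.
Qed.
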